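(* Let $G=(V,E)$ be a finite, connected, undirected graph with $n\ge2$ vertices, let $r>0$, let $(X_i)_{i\ge0}$ be the Moran process on $G$ with fitness $r$, and let $\emptyset\subsetneq S\subsetneq V$. If $r\ge1$ then $$\mathbb{E}[\phi(X_{i+1})-\phi(X_i)\mid X_i=S]\ \ge\ \Big(1-\frac1r\Big)\frac{1}{n^3},$$ with equality if and only if $r=1$. If $r<1$ then $$\mathbb{E}[\phi(X_{i+1})-\phi(X_i)\mid X_i=S]\ <\ \frac{r-1}{n^3}.$$
   Context: The Moran process on $G$ with mutant fitness $r>0$ is the Markov chain $(X_i)_{i\ge0}$ whose state $X_i\subseteq V$ is the set of vertices occupied by mutants; every other vertex is occupied by a non-mutant of fitness $1$. Write $W(S)=r|S|+|V\setminus S|$ for the total fitness. Given $X_i=S$, one step is: choose a vertex $x$ with probability $r/W(S)$ if $x\in S$ and $1/W(S)$ if $x\notin S$; then choose a neighbour $y$ of $x$ uniformly at random; set $X_{i+1}=S\cup\{y\}$ if $x\in S$ and $X_{i+1}=S\setminus\{y\}$ if $x\notin S$. The potential of a set $X\subseteq V$ is $\phi(X)=\sum_{x\in X}\frac{1}{\deg x}$. *)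

From HB Require Import structures.
From mathcomp Require Import all_boot all_order all_algebra.
Set Implicit Arguments. Unset Strict Implicit. Unset Printing Implicit Defensive.
Import Order.TTheory GRing.Theory Num.Theory.
Local Open Scope ring_scope.

Definition simple_graph (T : finType) (e : rel T) : Prop :=
  symmetric e /\ irreflexive e.
Definition connected_graph (T : finType) (e : rel T) : Prop :=
  forall x y : T, connect e x y.

Definition deg (T : finType) (e : rel T) (x : T) : nat := #|[set y | e x y]|.

Definition potential (R : realFieldType) (T : finType) (e : rel T)
  (X : {set T}) : R := \sum_(x in X) ((deg e x)%:R)^-1.

Definition fitness (R : realFieldType) (T : finType) (r : R) (S : {set T}) : R :=
  r * (#|S|)%:R + (#|~: S|)%:R.

Definition choose_prob (R : realFieldType) (T : finType) (r : R)
  (S : {set T}) (x : T) : R :=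
  (if x \in S then r else 1) / fitness r S.

Definition moran_next (T : finType) (S : {set T}) (x y : T) : {set T} :=
  if x \in S then y |: S else S :\ y.

(* E[phi(X_{i+1}) - phi(X_i) | X_i = S]: x chosen with choose_prob,
   y uniform among neighbours of x *)
Definition exp_pot_change (R : realFieldType) (T : finType) (e : rel T)
  (r : R) (S : {set T}) : R :=
  \sum_(x : T) \sum_(y : T | e x y)
     choose_prob r S x * ((deg e x)%:R)^-1 *
     (potential R e (moran_next S x y) - potential R e S).

From HB Require Import structures.
From mathcomp Require Import all_boot all_order all_algebra.
From mathcomp Require Import ring lra.
Import Order.TTheory GRing.Theory Num.Theory.
Local Open Scope ring_scope.

(* Write d x = 1/deg x and call an ordered pair (x, y) with e x y, x \in S and
   y \notin S a crossing pair, of weight d x * d y.  A mutant x \in S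
   reproducing onto a non-mutant neighbour y raises phi by d y; a non-mutant y
   reproducing onto a mutant neighbour x lowers phi by d x; every other step
   leaves the state unchanged.  Summing over all steps and using the symmetry
   of e gives the exact drift formula
       E[phi(X') - phi(X) | X = S] = (r - 1) / W(S) * B(S),
   where B(S) is the total weight of the crossing pairs.
   Connectivity provides a crossing edge, whose weight exceeds 1/n^2 since all
   degrees lie in (0, n); and W(S) <= max(r, 1) * n.  Hence
   B(S)/W(S) > 1/(max(r,1) n^3), and multiplying by r - 1 gives both bounds. *)

Lemma exists_crossing_edge {T : finType} {e : rel T} {S : {set T}} {x y : T} :
  connect e x y -> x \in S -> y \notin S ->
  exists u v, [/\ e u v, u \in S & v \notin S].
Proof.
move=> /connectP [p pth ->]; elim: p x pth => [|z p IH] x /= pth xS yS.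
  by rewrite xS in yS.
move/andP: pth => [exz pth].
case zS: (z \in S); first exact: IH pth zS yS.
by exists x, z; rewrite exz xS zS.
Qed.

Section DriftFormula.
Variables (R : realFieldType) (T : finType) (e : rel T) (r : R) (S : {set T}).
Hypothesis e_sym : symmetric e.

Definition crossing_weight (x y : T) : R :=
  if (x \in S) && (y \notin S) then ((deg e x)%:R)^-1 * ((deg e y)%:R)^-1
  else 0.

Definition boundary_weight : R :=
  \sum_(x : T) \sum_(y : T | e x y) crossing_weight x y.

Lemma step_contribution x y :
  choose_prob r S x * ((deg e x)%:R)^-1 *
     (potential R e (moran_next S x y) - potential R e S)
  = r / fitness r S * crossing_weight x y
    - 1 / fitness r S * crossing_weight y x.
Proof.
rewrite /crossing_weight /moran_next /choose_prob /potential.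
case xS: (x \in S); case yS: (y \in S) => /=.
- have -> : y |: S = S by apply/setUidPr; rewrite sub1set yS.
  by rewrite subrr !mulr0 subrr.
- by rewrite big_setU1 ?yS //= addrK; ring.
- by rewrite [in X in _ * (_ - X)](big_setD1 y) //=; ring.
- have -> : S :\ y = S by apply/setDidPl; rewrite disjoint_sym disjoints1 yS.
  by rewrite subrr !mulr0 subrr.
Qed.

Lemma drift_formula :
  exp_pot_change e r S = (r - 1) / fitness r S * boundary_weight.
Proof.
rewrite /exp_pot_change.
under eq_bigr => x _ do
  rewrite (eq_bigr _ (fun y _ => step_contribution x y)) sumrB -!mulr_sumr.
rewrite sumrB -!mulr_sumr.
have reversed : \sum_x \sum_(y | e x y) crossing_weight y x = boundary_weight.
  rewrite /boundary_weight.
  under eq_bigr => x _ do rewrite big_mkcond.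
  rewrite exchange_big /=; apply: eq_bigr => x _.
  by rewrite [RHS]big_mkcond; apply: eq_bigr => y _; rewrite e_sym.
rewrite reversed -/boundary_weight; ring.
Qed.

End DriftFormula.

Arguments crossing_weight R {T} e S x y.
Arguments boundary_weight R {T} e S.

Lemma deg_edge_bounds {T : finType} {e : rel T} {u v : T} :
  irreflexive e -> e u v -> (0 < deg e u)%N /\ (deg e u < #|T|)%N.
Proof.
move=> irr euv; split; first by apply/card_gt0P; exists v; rewrite inE.
rewrite /deg -cardsT; apply: proper_card; rewrite properT; apply/eqP => full.
by have := in_setT u; rewrite -full inE irr.
Qed.

(* A crossing edge has weight > 1/n^2, hence so does the boundary:
   B(S) * n^2 > 1 for every nonempty proper S of a connected simple graph. *)
Lemma boundary_weight_lower (R : realFieldType) {T : finType} {e : rel T}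
  {S : {set T}} :
  simple_graph e -> connected_graph e -> S != set0 -> S != setT ->
  1 < boundary_weight R e S * (#|T|%:R) ^+ 2.
Proof.
move=> [e_sym irr] conn S0 ST; set n : R := #|T|%:R.
have [x xS] := set0Pn _ S0.
have [y yS] : exists y, y \notin S.
  by move: ST; rewrite eqEsubset subsetT /= => /subsetPn [y _ ?]; exists y.
have [u [v [euv uS vS]]] := exists_crossing_edge (conn x y) xS yS.
have inv_deg_gt w : (0 < deg e w)%N -> (deg e w < #|T|)%N ->
    n^-1 < ((deg e w)%:R)^-1.
  move=> dw0 dwn; have n0 : (0 : R) < (deg e w)%:R by rewrite ltr0n.
  by rewrite ltf_pV2 // ?posrE ?ltr_nat // (lt_trans n0) // ltr_nat.
have [du0 dun] := deg_edge_bounds irr euv.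
have [dv0 dvn] : (0 < deg e v)%N /\ (deg e v < #|T|)%N.
  by apply: (deg_edge_bounds (v := u) irr); rewrite e_sym.
have n0 : 0 < n by rewrite ltr0n (leq_trans du0 (ltnW dun)).
have edge_le : ((deg e u)%:R^-1 * (deg e v)%:R^-1 : R) <= boundary_weight R e S.
  have cw_ge0 a b : 0 <= crossing_weight R e S a b.
    by rewrite /crossing_weight; case: ifP => // _; rewrite mulr_ge0 ?invr_ge0.
  rewrite /boundary_weight (bigD1 u) //= (bigD1 v) //= {1}/crossing_weight uS vS.
  by rewrite -addrA lerDl addr_ge0 ?sumr_ge0 // => w _; rewrite sumr_ge0.
have edge_gt : n^-1 * n^-1 < (deg e u)%:R^-1 * (deg e v)%:R^-1.
  by rewrite ltr_pM ?invr_ge0 ?ltW ?inv_deg_gt.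
have -> : 1 = n^-1 * n^-1 * n ^+ 2 by field; rewrite gt_eqF.
by rewrite ltr_pM2r ?exprn_gt0 // (lt_le_trans edge_gt).
Qed.

Lemma fitness_bounds {R : realFieldType} {T : finType} {r c : R} {S : {set T}} :
  0 < r -> S != set0 -> r <= c -> 1 <= c ->
  0 < fitness r S /\ fitness r S <= c * (#|T|%:R).
Proof.
move=> r0 S0 rc c1; rewrite /fitness -(cardsC S) natrD.
have S1 : (1 : R) <= #|S|%:R by rewrite ler1n card_gt0.
have C0 : (0 : R) <= #|~: S|%:R by rewrite ler0n.
by split; nra.
Qed.

Lemma ratio_lower {R : realFieldType} {B W n c : R} :
  0 < n -> 0 < c -> 0 < W -> W <= c * n -> 1 < B * n ^+ 2 ->
  c^-1 / n ^+ 3 < B / W.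
Proof.
move=> n0 c0 W0 Wc Bn.
rewrite ltr_pdivlMr // -invfM mulrC ltr_pdivrMr ?mulr_gt0 ?exprn_gt0 //.
have pos : 0 < (B * n ^+ 2 - 1) * (c * n) by rewrite mulr_gt0 ?subr_gt0 ?mulr_gt0.
rewrite (exprS n 2) mulrC; nra.
Qed.

Theorem lemma3 (R : realFieldType) (T : finType) (e : rel T)
  (r : R) (S : {set T}) :
  simple_graph e -> connected_graph e -> (2 <= #|T|)%N ->
  0 < r -> S != set0 -> S != setT ->
  let n : R := (#|T|)%:R in
  (1 <= r ->
     (1 - r^-1) / n ^+ 3 <= exp_pot_change e r S /\
     (exp_pot_change e r S = (1 - r^-1) / n ^+ 3 <-> r = 1)) /\
  (r < 1 -> exp_pot_change e r S < (r - 1) / n ^+ 3).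
Proof.
move=> G conn n2 r0 S0 ST n.
have n0 : 0 < n by rewrite ltr0n (leq_trans _ n2).
have Bn := boundary_weight_lower R G conn S0 ST.
rewrite drift_formula; last by case: G.
set B := boundary_weight R e S; set W := fitness r S.
have -> : (r - 1) / W * B = (r - 1) * (B / W) by rewrite mulrA mulrAC.
split => [r1 | r1].
- have [W0 Wr] := fitness_bounds r0 S0 (lexx r) r1.
  have lt := ratio_lower n0 r0 W0 Wr Bn.
  have -> : (1 - r^-1) / n ^+ 3 = (r - 1) * (r^-1 / n ^+ 3).
    by field; rewrite !gt_eqF ?exprn_gt0.
  have [-> | rn1] := eqVneq r 1; first by rewrite subrr !mul0r.
  have gt : (r - 1) * (r^-1 / n ^+ 3) < (r - 1) * (B / W).
    by rewrite ltr_pM2l // subr_gt0 lt_neqAle eq_sym rn1.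
  split; first exact: ltW.
  by split=> [eq_drift | r_eq1]; [move: gt; rewrite eq_drift ltxx | rewrite r_eq1 eqxx in rn1].
- have [W0 W1] := fitness_bounds r0 S0 (ltW r1) (lexx 1).
  have lt := ratio_lower n0 ltr01 W0 W1 Bn.
  rewrite invr1 mul1r in lt.
  by rewrite ltr_nM2l // subr_lt0.
Qed.
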